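(* Let $A$ and $B$ be rings, $f: A\to B$ a ring homomorphism and $J$ a proper ideal of $B$ such that $f^{-1}(J)\cap \mathrm{nil}(A)=(0)$. If $f(A)+J$ is an Armendariz ring, then $A\bowtie^{f}J$ is an Armendariz ring.
   Context: All rings are associative with identity (not necessarily commutative), ring homomorphisms are unital, and ideals are two-sided. $\mathrm{nil}(R)$ denotes the set of nilpotent elements of a ring $R$. For a ring homomorphism $f:A\to B$ and an ideal $J$ of $B$, the amalgamation is the subring $A\bowtie^{f}J=\{(a,f(a)+j)\mid a\in A,\ j\in J\}$ of $A\times B$; $f(A)+J=\{f(a)+j: a\in A, j\in J\}$ is a subring of $B$. A ring $R$ is Armendariz if whenever $p(x)=\sum_{i=0}^n a_ix^i$ and $q(x)=\sum_{j=0}^m b_jx^j$ in $R[x]$ satisfy $p(x)q(x)=0$, then $a_ib_j=0$ for all $i,j$. *)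

From HB Require Import structures.
From mathcomp Require Import all_boot all_order all_algebra.
Set Implicit Arguments. Unset Strict Implicit. Unset Printing Implicit Defensive.
Import GRing.Theory.
Local Open Scope ring_scope.

Definition armendariz (R : nzRingType) : Prop :=
  forall p q : {poly R}, p * q = 0 -> forall i j : nat, p`_i * q`_j = 0.

(* Armendariz property for a subring S of R (given as a predicate on R):
   this is literally the Armendariz property of the ring S, since
   polynomials over S are polynomials over R with coefficients in S and
   multiplication is computed in R. *)
Definition armendariz_sub {R : nzRingType} (S : R -> Prop) : Prop :=
  forall p q : {poly R}, (forall i, S p`_i) -> (forall i, S q`_i) ->
    p * q = 0 -> forall i j : nat, p`_i * q`_j = 0.

Definition is_nilpotent {R : nzRingType} (a : R) : Prop := exists n : nat, a ^+ n = 0.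

Definition is_ideal2s {R : nzRingType} (J : R -> Prop) : Prop :=
  [/\ J 0, (forall x y, J x -> J y -> J (x - y)),
      (forall r x, J x -> J (r * x)) & (forall r x, J x -> J (x * r))].

Definition proper_ideal2s {R : nzRingType} (J : R -> Prop) : Prop :=
  is_ideal2s J /\ ~ J 1.

Definition amalgamation {A B : nzRingType} (f : A -> B) (J : B -> Prop)
  : A * B -> Prop :=
  fun x => exists (a : A) (j : B), J j /\ x = (a, f a + j).

Definition img_plus {A B : nzRingType} (f : A -> B) (J : B -> Prop) : B -> Prop :=
  fun b => exists (a : A) (j : B), J j /\ b = f a + j.

(** The two projections of a product [p * q = 0] over [A ⋈^f J] are products
    equal to zero over [f(A) + J] and over [A].  Over [f(A) + J] the Armendariz
    hypothesis kills the second components of [p_i * q_j].  For the first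
    components it only gives [f (a_i * b_j) = 0], i.e. [a_i * b_j] lies in
    [ker f]; since [ker f ⊆ f^-1(J)], this ideal has no nonzero nilpotents, and
    for such an ideal the classical argument for reduced rings applies: by
    induction on [i + j], [x := a_i * b_j] satisfies
    [x^5 = \sum_l x x a_l b_(i+j-l) x x = x x (p q)_(i+j) x x = 0]. *)
From HB Require Import structures.
From mathcomp Require Import all_boot all_order all_algebra zify.
Import GRing.Theory.
Local Open Scope ring_scope.

Section ReducedIdeal.

Variables (R : nzRingType) (P : R -> Prop).
Hypothesis P_mull : forall r x, P x -> P (r * x).
Hypothesis P_mulr : forall r x, P x -> P (x * r).
Hypothesis P_nil : forall x n, P x -> x ^+ n = 0 -> x = 0.

Lemma sqr_eq0 u : P u -> u * u = 0 -> u = 0.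
Proof. by move=> Pu uu; apply: (P_nil u 2 Pu); rewrite expr2. Qed.

Lemma mulr_eq0C y z : P y -> y * z = 0 -> z * y = 0.
Proof.
move=> Py yz; apply: sqr_eq0; first exact: P_mull.
by rewrite mulrA -(mulrA z) yz mulr0 mul0r.
Qed.

Lemma mulr_eq0C' y z : P y -> z * y = 0 -> y * z = 0.
Proof.
move=> Py zy; apply: sqr_eq0; first exact: P_mulr.
by rewrite mulrA -(mulrA y) zy mulr0 mul0r.
Qed.

Lemma mulrr_eq0_l a b c : P (a * b) -> c * b = 0 -> a * b * (a * b) * c = 0.
Proof.
move=> Pab cb; have Pabc : P (a * b * c) by exact: P_mulr.
have babc : b * (a * b * c) = 0 by apply: mulr_eq0C Pabc _; rewrite -mulrA cb mulr0.
by rewrite -mulrA -(mulrA a) babc mulr0.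
Qed.

Lemma mulrr_eq0_r a b c : P (a * b) -> a * c = 0 -> c * (a * b) * (a * b) = 0.
Proof.
move=> Pab ac; have Pcab : P (c * (a * b)) by exact: P_mull.
have caba : c * (a * b) * a = 0 by apply: mulr_eq0C' Pcab _; rewrite mulrA ac mul0r.
by rewrite mulrA caba mul0r.
Qed.

Lemma coef_mul_eq0 (p q : {poly R}) : p * q = 0 ->
  (forall i j, P (p`_i * q`_j)) -> forall i j, p`_i * q`_j = 0.
Proof.
move=> pq0 Ppq.
suff coef_eq0 k i j : (i + j)%N = k -> p`_i * q`_j = 0 by move=> i j; exact: coef_eq0.
elim/ltn_ind: k i j => k IHk i j ijk.
have low_eq0 i' j' : (i' + j' < k)%N -> p`_i' * q`_j' = 0.
  by move=> lt; exact: IHk lt i' j' erefl.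
set x := p`_i * q`_j; have Px : P x by exact: Ppq.
apply: (P_nil x 5 Px).
have sum_eq0 : \sum_(l < k.+1) x * x * (p`_l * q`_(k - l)) * (x * x) = 0.
  by rewrite -mulr_suml -mulr_sumr -coefM pq0 coef0 mulr0 mul0r.
have ik : (i < k.+1)%N by rewrite -ijk ltnS leq_addr.
rewrite -sum_eq0 (bigD1 (Ordinal ik)) //= big1 ?addr0.
  by rewrite -ijk addKn !exprS expr0 mulr1 !mulrA.
move=> [l lk] /=; rewrite -val_eqE /= => nli.
(* For [l < i] the induction hypothesis gives [a_l b_j = 0], for [l > i] it gives [a_i b_(k-l) = 0]. *)
case: (ltngtP l i) nli => // [li | il] _.
- have xxp : x * x * p`_l = 0.
    by apply: mulrr_eq0_l => //; apply: low_eq0; lia.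
  by rewrite [_ * (p`_l * _)]mulrA xxp !mul0r.
- have qxx : q`_(k - l) * x * x = 0.
    by apply: mulrr_eq0_r => //; apply: low_eq0; lia.
  have -> : x * x * (p`_l * q`_(k - l)) * (x * x) = x * x * p`_l * (q`_(k - l) * x * x).
    by rewrite /x !mulrA.
  by rewrite qxx mulr0.
Qed.

End ReducedIdeal.

Lemma coef_map_mul (R S : nzRingType) (g : {rmorphism R -> S}) (p q : {poly R}) i j :
  (map_poly g p)`_i * (map_poly g q)`_j = g (p`_i * q`_j).
Proof. by rewrite !coef_map rmorphM. Qed.

Lemma map_poly_mul_eq0 {R S : nzRingType} (g : {rmorphism R -> S}) {p q : {poly R}} :
  p * q = 0 -> map_poly g p * map_poly g q = 0.
Proof. by move=> pq0; rewrite -rmorphM pq0 rmorph0. Qed.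

Lemma coef_mul_eq0_ker {R S : nzRingType} (g : {rmorphism R -> S})
    (ker_reduced : forall x n, g x = 0 -> x ^+ n = 0 -> x = 0) {p q : {poly R}} :
  p * q = 0 -> (forall i j, g (p`_i * q`_j) = 0) -> forall i j, p`_i * q`_j = 0.
Proof.
apply: (@coef_mul_eq0 _ (fun x => g x = 0)) => // [r x | r x] /= gx.
  by rewrite rmorphM gx mulr0.
by rewrite rmorphM gx mul0r.
Qed.

Theorem theorem2p2 (A B : nzRingType) (f : {rmorphism A -> B}) (J : B -> Prop)
  (hJ : proper_ideal2s J)
  (hnil : forall a : A, J (f a) -> is_nilpotent a -> a = 0)
  (harm : armendariz_sub (img_plus f J)) :
  armendariz_sub (amalgamation f J).
Proof.
case: hJ => [[J0 _ _ _] _] p q Pp Pq pq0 i j.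
have snd_img (r : {poly A * B}) : (forall k, amalgamation f J r`_k) ->
    forall k, img_plus f J (map_poly snd r)`_k.
  by move=> Pr k; rewrite coef_map; have [a [b [Jb ->]]] := Pr k; exists a, b.
have f_img (r : {poly A}) k : img_plus f J (map_poly f r)`_k.
  by rewrite coef_map; exists r`_k, 0; rewrite addr0.
have snd_eq0 : (p`_i * q`_j).2 = 0.
  rewrite -coef_map_mul.
  exact: (harm _ _ (snd_img _ Pp) (snd_img _ Pq) (map_poly_mul_eq0 snd pq0)).
have fst_eq0 : (p`_i * q`_j).1 = 0.
  rewrite -coef_map_mul; apply: (coef_mul_eq0_ker f _ (map_poly_mul_eq0 fst pq0)).
    by move=> a n fa an; apply: hnil; [rewrite fa | exists n].
  move=> i' j'; rewrite -coef_map_mul.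
  exact: (harm _ _ (f_img _) (f_img _) (map_poly_mul_eq0 f (map_poly_mul_eq0 fst pq0))).
by apply: injective_projections.
Qed.
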